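(* Let $t\ge2$, $n\ge1$, $\lambda$ a partition of length at most $tn+1$ with $t$-quotient $(\lambda^{(0)},\dots,\lambda^{(t-1)})$, and $0\le p,q\le t-1$ with $n_p(\lambda)+n_q(\lambda)=2n+1$. Let $\rho^*_{p,q}$ be the partition of length $2n+1$ obtained by adding $\lambda^{(p)}_1$ to each entry of $(\lambda^{(q)}_1,\dots,\lambda^{(q)}_{n_q(\lambda)},-\lambda^{(p)}_{n_p(\lambda)},\dots,-\lambda^{(p)}_1)$. Then \[s_{\rho^*_{p,q}}(X^t,\overline{X}^t,y^t)=\frac{(-1)^{\frac{n_p(\lambda)(n_p(\lambda)-1)}{2}}\,y^{t(\lambda^{(p)}_1+n_p(\lambda))}}{V(X^t,\overline{X}^t,y^t)}\det\begin{pmatrix}A^\lambda_{q,-q}&\overline{A}^\lambda_{p,t-p}\\ \overline{A}^\lambda_{q,-q}&A^\lambda_{p,t-p}\\ B^\lambda_{q,-q}&\overline{B}^\lambda_{p,t-p}\end{pmatrix},\] where $V(X^t,\overline{X}^t,y^t)=\prod_{1\le i<j\le n}(x_i^t-x_j^t)(x_i^t-\bar x_j^t)(x_j^t-\bar x_i^t)(\bar x_i^t-\bar x_j^t)\prod_{i=1}^n(x_i^t-y^t)(x_i^t-\bar x_i^t)(\bar x_i^t-y^t)$.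
   Context: $X=(x_1,\dots,x_n)$, $y$ indeterminates, $\bar x=1/x$, $\bar y=1/y$; $(X^t,\overline{X}^t,y^t)$ denotes the $2n+1$ variables $x_1^t,\dots,x_n^t,\bar x_1^t,\dots,\bar x_n^t,y^t$. $s_\mu(z_1,\dots,z_N)=\det(z_i^{\mu_j+N-j})/\det(z_i^{N-j})$. Beta-set $\beta_i(\lambda)=\lambda_i+tn+1-i$ ($1\le i\le tn+1$); $n_r(\lambda)$ is the number of entries congruent to $r$ mod $t$, and $\beta^{(r)}_1(\lambda)>\dots>\beta^{(r)}_{n_r(\lambda)}(\lambda)$ are those entries. $t$-quotient: writing $\beta^{(r)}_j(\lambda)=tb_j+r$, $\lambda^{(r)}=(b_j-n_r(\lambda)+j)_{j=1}^{n_r(\lambda)}$. For an integer $c$: $A^\lambda_{r,c}=(x_i^{\beta^{(r)}_j(\lambda)+c})$ and $\overline{A}^\lambda_{r,c}=(\bar x_i^{\beta^{(r)}_j(\lambda)+c})$ are $n\times n_r(\lambda)$ matrices ($1\le i\le n$, $1\le j\le n_r(\lambda)$); $B^\lambda_{r,c}=(y^{\beta^{(r)}_j(\lambda)+c})_j$ and $\overline{B}^\lambda_{r,c}=(\bar y^{\beta^{(r)}_j(\lambda)+c})_j$ are $1\times n_r(\lambda)$ row vectors. The displayed matrix is $(2n+1)\times(2n+1)$ in block form. *)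

From mathcomp Require Import all_boot all_order all_algebra.
Set Implicit Arguments. Unset Strict Implicit. Unset Printing Implicit Defensive.
Import Order.TTheory GRing.Theory Num.Theory.
Local Open Scope ring_scope.

Definition beta_set (lam : seq nat) (N : nat) : seq nat :=
  [seq (nth 0 lam k + (N - 1 - k))%N | k <- iota 0 N].

Definition beta_r (lam : seq nat) (N t r : nat) : seq nat :=
  [seq b <- beta_set lam N | b %% t == r]%N.

Definition n_r (lam : seq nat) (N t r : nat) : nat := size (beta_r lam N t r).

(* r-th component of the t-quotient: writing beta^(r)_j = t b_j + r,
   lambda^(r)_j = b_j - n_r + j (1-indexed j); here 0-indexed. *)
Definition tquot (lam : seq nat) (N t r : nat) : seq nat :=
  let br := beta_r lam N t r in
  mkseq (fun j => (nth 0 br j %/ t + j.+1 - size br)%N) (size br).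

Definition rho_star (lam : seq nat) (N t p q : nat) : seq nat :=
  let L := nth 0 (tquot lam N t p) 0 in
  [seq (a + L)%N | a <- tquot lam N t q] ++
  [seq (L - a)%N | a <- rev (tquot lam N t p)].

Definition schur (F : fieldType) (M : nat) (mu : seq nat) (z : 'I_M -> F) : F :=
  \det (\matrix_(i < M, j < M) z i ^+ (nth 0 mu j + (M - 1 - j))%N) /
  \det (\matrix_(i < M, j < M) z i ^+ (M - 1 - j)%N).

Definition zvars (F : fieldType) (n t : nat) (x : nat -> F) (y : F)
  : 'I_(2 * n + 1) -> F :=
  fun k => if (k < n)%N then x k ^+ t
           else if (k < 2 * n)%N then (x (k - n)%N)^-1 ^+ t
           else y ^+ t.

Definition rowvar (F : fieldType) (n : nat) (x : nat -> F) (y : F) (i : nat) : F :=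
  if (i < n)%N then x i else if (i < 2 * n)%N then (x (i - n)%N)^-1 else y.

(* The (2n+1)x(2n+1) block matrix
   ( A_{q,-q}     Abar_{p,t-p} )
   ( Abar_{q,-q}  A_{p,t-p}    )
   ( B_{q,-q}     Bbar_{p,t-p} ) *)
Definition Mblock (F : fieldType) (n t : nat) (lam : seq nat) (p q : nat)
  (x : nat -> F) (y : F) : 'M[F]_(2 * n + 1) :=
  let N := (t * n + 1)%N in
  let bq := beta_r lam N t q in
  let bp := beta_r lam N t p in
  let nq := size bq in
  \matrix_(i < 2 * n + 1, j < 2 * n + 1)
    if (j < nq)%N then rowvar n x y i ^+ (nth 0 bq j - q)%N
    else (rowvar n x y i)^-1 ^+ (nth 0 bp (j - nq) + t - p)%N.

Definition Vprod (F : fieldType) (n t : nat) (x : nat -> F) (y : F) : F :=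
  let X i := x i ^+ t in
  let Xb i := (x i)^-1 ^+ t in
  let Y := y ^+ t in
  (\prod_(i < n) \prod_(j < n | (i < j)%N)
     ((X i - X j) * (X i - Xb j) * (X j - Xb i) * (Xb i - Xb j))) *
  \prod_(i < n) ((X i - Y) * (X i - Xb i) * (Xb i - Y)).

Arguments schur {F M} mu z.
Arguments zvars {F} n t x y.
Arguments rowvar {F} n x y i.
Arguments Mblock {F} n t lam p q x y.
Arguments Vprod {F} n t x y.

(* Index everything from 0 and write v_i for the base variables
   (x_1, .., x_n, 1/x_1, .., 1/x_n, y), so that the variables of the Schur function are
   v_i^t and its denominator is the Vandermonde product V.  In the numerator
   det (v_i^(t (rho_j + 2n - j))), the exponent is t (L + n_p) + (beta^(q)_j - q) on the
   first n_q columns and t (L + n_p) - (beta^(p)_k + t - p), k = 2n - j, on the last n_p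
   ones, where L = lambda^(p)_0; both identities come from
   beta^(r)_j = t (lambda^(r)_j + n_r - 1 - j) + r.  Factoring v_i^(t (L + n_p)) out of
   every row therefore leaves the block matrix with its last n_p columns in reverse
   order.  The row factors multiply to y^(t (L + n_p)) since x_i (1/x_i) = 1, and
   reversing n_p columns costs the sign (-1)^(n_p (n_p - 1) / 2). *)

From mathcomp Require Import all_boot all_order all_algebra.
From mathcomp Require Import zify ring perm.
Set Implicit Arguments.
Unset Strict Implicit.
Unset Printing Implicit Defensive.
Import GRing.Theory.
Local Open Scope ring_scope.

Definition rev_block_idx (a k j : nat) : nat :=
  if (a <= j < a + k)%N then (a + k - 1 - (j - a))%N else j.

Definition rev_block {m} (a k : nat) (j : 'I_m) : 'I_m := insubd j (rev_block_idx a k j).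

Lemma rev_blockE m a k (j : 'I_m) :
  (a + k <= m)%N -> val (rev_block a k j) = rev_block_idx a k j.
Proof.
move=> akm; rewrite val_insubd; case: ifP => // /negP[].
by rewrite /rev_block_idx; have := ltn_ord j; case: ifP => //; lia.
Qed.

Section ColumnReversal.
Variable R : comPzRingType.

Lemma det_xcol m (u v : 'I_m) (A : 'M[R]_m) : u != v -> \det (xcol u v A) = - \det A.
Proof. by move=> uv; rewrite xcolE det_mulmx det_perm odd_tperm uv mulrN1. Qed.

(* Reversing a block of length k.+2 is reversing its interior, then swapping its ends. *)
Lemma det_rev_block m (A : 'M[R]_m) a k : (a + k <= m)%N ->
  \det (\matrix_(i, j) A i (rev_block a k j)) = (-1) ^+ ((k * k.-1) %/ 2) * \det A.
Proof.
elim/ltn_ind: k a => -[|[|k]] IH a akm.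
1-2: rewrite mul1r; congr (\det _); apply/matrixP => i j; rewrite mxE; congr (A i _).
1-2: by apply: val_inj; rewrite rev_blockE // /rev_block_idx /=; case: ifP; lia.
have am : (a < m)%N by lia.
have akm' : (a + k.+1 < m)%N by lia.
pose u := Ordinal am; pose v := Ordinal akm'.
have uv : u != v by rewrite -val_eqE /=; lia.
have -> : \matrix_(i, j) A i (rev_block a k.+2 j) =
    xcol u v (\matrix_(i, j) A i (rev_block a.+1 k j)).
  apply/matrixP => i j; rewrite !mxE; congr (A i _); apply: val_inj.
  rewrite !rev_blockE /rev_block_idx; try lia.
  case: tpermP => [->|->|/eqP ju /eqP jv] /=; last rewrite -!val_eqE /= in ju jv;
    by case: ifP; case: ifP; lia.
rewrite det_xcol // IH; try lia.
have sign_step : ((k.+2 * k.+1) %/ 2 = (k * k.-1) %/ 2 + (2 * k).+1)%N.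
  rewrite (_ : k.+2 * k.+1 = k * k.-1 + 2 * (2 * k).+1)%N; last first.
    by case: k {IH akm akm' v uv} => /=; lia.
  by rewrite divnDr ?dvdn_mulr // mulKn.
by rewrite sign_step exprD exprS exprM sqrrN !expr1n; ring.
Qed.

End ColumnReversal.

Lemma rev_block_fullE M (j : 'I_M) : val (rev_block 0 M j) = (M - 1 - j)%N.
Proof. by rewrite rev_blockE // /rev_block_idx /=; case: ifP; have := ltn_ord j; lia. Qed.

Lemma rev_block_fullK M : involutive (@rev_block M 0 M).
Proof. by move=> j; apply: val_inj; rewrite /= !rev_block_fullE; have := ltn_ord j; lia. Qed.

(* Reverse both the rows and the columns of the transposed Vandermonde matrix: the
   two signs cancel. *)
Lemma det_Vandermonde_rev (R : comPzRingType) M (z : 'I_M -> R) :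
  \det (\matrix_(i < M, j < M) z i ^+ (M - 1 - j)) =
  \prod_(i < M) \prod_(j < M | (i < j)%N) (z i - z j).
Proof.
pose rev := @rev_block M 0 M.
pose B := \matrix_(i < M, j < M) z i ^+ j.
pose W := Vandermonde M (\row_j z (rev j)).
have rev_inj : injective rev := can_inj (@rev_block_fullK M).
have -> : \matrix_(i < M, j < M) z i ^+ (M - 1 - j) = \matrix_(i, j) B i (rev j).
  by apply/matrixP => i j; rewrite !mxE rev_block_fullE.
have -> : B = (\matrix_(i, j) W i (rev j))^T.
  by apply/matrixP => i j; rewrite !mxE /rev rev_block_fullK.
rewrite det_rev_block // det_tr det_rev_block // mulrA -expr2 sqrr_sign mul1r.
rewrite det_Vandermonde !pair_big_dep /=.
rewrite (reindex_inj (h := fun ij : 'I_M * 'I_M => (rev ij.2, rev ij.1))) /=; last first.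
  by move=> [i j] [i' j'] /= [/rev_inj -> /rev_inj ->].
apply: eq_big => -[i j] /=.
  by rewrite !rev_block_fullE; have := ltn_ord i; have := ltn_ord j; lia.
by move=> _; rewrite !mxE /rev !rev_block_fullK.
Qed.

Section PairProducts.
Variable R : comPzRingType.

Definition prod_pairs_lt m (f : nat -> nat -> R) : R :=
  \prod_(i < m) \prod_(j < m | (i < j)%N) f i j.

Lemma prod_pairs_lt1 f : prod_pairs_lt 1 f = 1.
Proof. by rewrite /prod_pairs_lt big_ord1 big_pred0 // => j; rewrite (ord1 j). Qed.

Lemma prod_pairs_ltD a b f :
  prod_pairs_lt (a + b) f =
  prod_pairs_lt a f * prod_pairs_lt b (fun i j => f (a + i)%N (a + j)%N) *
  \prod_(i < a) \prod_(j < b) f i (a + j)%N.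
Proof.
rewrite /prod_pairs_lt big_split_ord /= mulrAC -big_split /=; congr (_ * _).
  apply: eq_bigr => i _; rewrite big_split_ord /=; congr (_ * _).
  by apply: eq_bigl => j /=; rewrite ltn_addr.
apply: eq_bigr => i _; rewrite big_split_ord /= big_pred0 ?mul1r => [|j].
  by apply: eq_bigl => j; rewrite ltn_add2l.
by apply/negbTE; rewrite -leqNgt; have := ltn_ord j; lia.
Qed.

Lemma prod_square_pairs n (h : 'I_n -> 'I_n -> R) :
  \prod_(i < n) \prod_(j < n) h i j =
  \prod_(i < n) h i i * \prod_(i < n) \prod_(j < n | (i < j)%N) h i j *
  \prod_(i < n) \prod_(j < n | (i < j)%N) h j i.
Proof.
under eq_bigr => i _ do rewrite (bigD1 i) //= (bigID (fun j : 'I_n => (i < j)%N)) /=.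
rewrite !big_split /= -mulrA; congr (_ * (_ * _)).
  by apply: eq_bigr => i _; apply: eq_bigl => j; rewrite -val_eqE /=; case: ltngtP.
rewrite [RHS](exchange_big_dep xpredT) //=.
by apply: eq_bigr => i _; apply: eq_bigl => j; rewrite -val_eqE /=; case: ltngtP.
Qed.

End PairProducts.
Arguments prod_pairs_lt {R} m f.

Section RowVariables.
Variables (F : fieldType) (n t : nat) (x : nat -> F) (y : F).

Lemma zvarsE (i : 'I_(2 * n + 1)) : zvars n t x y i = rowvar n x y i ^+ t.
Proof. by rewrite /zvars /rowvar; case: ifP => //; case: ifP. Qed.

Lemma rowvar_lo i : (i < n)%N -> rowvar n x y i = x i.
Proof. by rewrite /rowvar => ->. Qed.

Lemma rowvar_mid i : (i < n)%N -> rowvar n x y (n + i) = (x i)^-1.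
Proof. by move=> ilt; rewrite /rowvar ifF ?ifT ?addKn //; lia. Qed.

Lemma rowvar_last : rowvar n x y (n + n + 0) = y.
Proof. by rewrite /rowvar !ifF //; lia. Qed.

Lemma rowvar_neq0 i :
  (forall i, (i < n)%N -> x i != 0) -> y != 0 -> rowvar n x y i != 0.
Proof.
move=> x_neq0 y_neq0; rewrite /rowvar; case: ifP => [/x_neq0 //|_].
by case: ifP => // ilt; rewrite invr_eq0 x_neq0 //; lia.
Qed.

Lemma prod_rowvar : (forall i, (i < n)%N -> x i != 0) ->
  \prod_(i < 2 * n + 1) rowvar n x y i = y.
Proof.
move=> x_neq0; rewrite (_ : (2 * n + 1 = n + n + 1)%N); last lia.
rewrite !big_split_ord big_ord1 /= rowvar_last -big_split /= big1 ?mul1r // => i _.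
by rewrite rowvar_lo // rowvar_mid // mulfV ?x_neq0.
Qed.

Lemma vandermonde_zvars :
  \prod_(i < 2 * n + 1) \prod_(j < 2 * n + 1 | (i < j)%N)
     (zvars n t x y i - zvars n t x y j) = Vprod n t x y.
Proof.
pose v i := rowvar n x y i ^+ t.
pose X i := x i ^+ t; pose Xb i := (x i)^-1 ^+ t; pose Y := y ^+ t.
have vX (i : 'I_n) : v i = X i by rewrite /v rowvar_lo.
have vXb (i : 'I_n) : v (n + i)%N = Xb i by rewrite /v rowvar_mid.
have vY : v (n + n + 0)%N = Y by rewrite /v rowvar_last.
transitivity (prod_pairs_lt (n + n + 1) (fun i j => v i - v j)).
  by rewrite addnn -mul2n; apply: eq_bigr => i _; apply: eq_bigr => j _; rewrite !zvarsE.
rewrite !prod_pairs_ltD prod_pairs_lt1 mulr1 /prod_pairs_lt big_split_ord /=.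
transitivity ((\prod_(i < n) \prod_(j < n | (i < j)%N) (X i - X j)) *
   (\prod_(i < n) \prod_(j < n | (i < j)%N) (Xb i - Xb j)) *
   (\prod_(i < n) \prod_(j < n) (X i - Xb j)) *
   (\prod_(i < n) (X i - Y) * \prod_(i < n) (Xb i - Y))).
  congr (_ * _ * _ * (_ * _)); apply: eq_bigr => i _;
    by [apply: eq_bigr => j _; rewrite ?vX ?vXb | rewrite big_ord1 vY ?vX ?vXb].
rewrite prod_square_pairs /Vprod /=.
under [in RHS]eq_bigr => i _ do rewrite !big_split /=.
rewrite !big_split /= /X /Xb /Y.
ring.
Qed.

End RowVariables.

Section TQuotient.
Local Open Scope nat_scope.

Lemma gtn_sorted_nth_gap (s : seq nat) j k : sorted gtn s -> j <= k < size s ->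
  nth 0 s k + (k - j) <= nth 0 s j.
Proof.
move=> /(sortedP 0) s_decr /andP[]; elim: k => [|k IH].
  by rewrite leqn0 => /eqP-> _; rewrite subnn addn0.
rewrite leq_eqVlt => /orP[/eqP -> _ | /ltnSE jk ks]; first by rewrite subnn addn0.
have /= := s_decr k ks; have := IH jk (ltnW ks); lia.
Qed.

Variables (lam : seq nat) (N t : nat).
Hypotheses (t_gt0 : 0 < t) (lam_sorted : sorted geq lam).

Lemma beta_set_sorted : sorted gtn (beta_set lam N).
Proof.
apply/(sortedP 0) => i; rewrite size_map size_iota => iN.
rewrite !(nth_map 0) ?size_iota ?nth_iota; try lia.
rewrite /= !add0n; suff : nth 0 lam i.+1 <= nth 0 lam i by lia.
case: (ltnP i.+1 (size lam)) => [|/(nth_default 0) ->] //.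
by move/(sortedP 0): lam_sorted; apply.
Qed.

Variable r : nat.
Local Notation br := (beta_r lam N t r).

Lemma beta_r_sorted : sorted gtn br.
Proof. by apply: sorted_filter; [exact: rev_trans ltn_trans | exact: beta_set_sorted]. Qed.

Lemma beta_r_modn b : b \in br -> b %% t = r.
Proof. by rewrite mem_filter => /andP[/eqP]. Qed.

(* The entries of br are congruent mod t, so their quotients by t decrease strictly. *)
Lemma beta_r_divn_sorted : sorted gtn [seq b %/ t | b <- br].
Proof.
rewrite sorted_map; apply: (sub_in_sorted _ (allss _) beta_r_sorted).
move=> a b /beta_r_modn ma /beta_r_modn mb /=.
rewrite {1}(divn_eq a t) {1}(divn_eq b t) ma mb ltn_add2r ltn_pmul2r //.
Qed.

Lemma size_tquot : size (tquot lam N t r) = size br.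
Proof. by rewrite size_mkseq. Qed.

Lemma nth_tquot j : j < size br ->
  nth 0 (tquot lam N t r) j = nth 0 br j %/ t + j.+1 - size br.
Proof. by move=> jlt; rewrite nth_mkseq. Qed.

Lemma tquot_beta_r j : j < size br ->
  t * (nth 0 (tquot lam N t r) j + size br - j.+1) = nth 0 br j - r.
Proof.
move=> jlt; rewrite nth_tquot //.
have last_lt : (size br).-1 < size br by lia.
have := @gtn_sorted_nth_gap _ j (size br).-1 beta_r_divn_sorted.
rewrite size_map last_lt -ltnS prednK ?jlt ?(nth_map 0) //; last lia.
set B0 := _ %/ t; set B := _ %/ t => /(_ isT) gap.
have -> : B + j.+1 - size br + size br - j.+1 = B by lia.
by rewrite {1}(divn_eq (nth 0 br j) t) beta_r_modn ?mem_nth // addnK mulnC.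
Qed.

Lemma tquot_nonincreasing j k : j <= k < size br ->
  nth 0 (tquot lam N t r) k <= nth 0 (tquot lam N t r) j.
Proof.
move=> /andP[jk ks]; have js : j < size br by apply: leq_ltn_trans ks.
have := @gtn_sorted_nth_gap _ j k beta_r_divn_sorted.
rewrite !nth_tquot // size_map jk ks !(nth_map 0) // => /(_ isT).
set Bk := _ %/ t; set Bj := _ %/ t; lia.
Qed.

End TQuotient.

Section RhoStarExponents.
Local Open Scope nat_scope.
Variables (lam : seq nat) (N t p q : nat).
Hypotheses (t_gt0 : 0 < t) (lam_sorted : sorted geq lam).
Local Notation bp := (beta_r lam N t p).
Local Notation bq := (beta_r lam N t q).
Local Notation np := (size bp).
Local Notation nq := (size bq).
Local Notation L := (nth 0 (tquot lam N t p) 0).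
Local Notation rho := (rho_star lam N t p q).

(* [rho_star] is defined in ring scope: the default and index of its [nth] are the
   zero of the nat semiring, which is only convertible to [0%N]. *)
Lemma rho_starE :
  rho = [seq a + L | a <- tquot lam N t q] ++ [seq L - a | a <- rev (tquot lam N t p)].
Proof. by []. Qed.

Lemma rho_star_exp_q j : j < nq ->
  t * (nth 0 rho j + (nq + np - 1 - j)) = t * (L + np) + (nth 0 bq j - q).
Proof.
move=> jlt; rewrite rho_starE nth_cat size_map size_tquot jlt (nth_map 0) ?size_tquot //.
by rewrite -tquot_beta_r // -mulnDr; congr (t * _); lia.
Qed.

Lemma rho_star_exp_p k : k < np ->
  t * (nth 0 rho (nq + np - 1 - k) + k) + (nth 0 bp k + t - p) = t * (L + np).
Proof.
move=> klt; rewrite rho_starE nth_cat size_map size_tquot ifF; last lia.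
rewrite (nth_map 0) ?size_rev ?size_tquot; last lia.
rewrite nth_rev ?size_tquot; last lia.
have -> : np - (nq + np - 1 - k - nq).+1 = k by lia.
have Lk : nth 0 (tquot lam N t p) k <= L by apply: tquot_nonincreasing => //; lia.
have bp_ge : p <= nth 0 bp k by rewrite -{1}(beta_r_modn (mem_nth 0 klt)) leq_mod.
rewrite (_ : nth 0 bp k + t - p = nth 0 bp k - p + t); last lia.
by rewrite -tquot_beta_r // addnA -mulnDr -mulnSr; congr (t * _); lia.
Qed.

End RhoStarExponents.

Section NumeratorFactorization.
Variables (F : fieldType) (n t : nat) (lam : seq nat) (p q : nat) (x : nat -> F) (y : F).
Hypotheses (t_gt0 : (0 < t)%N) (lam_sorted : sorted geq lam).
Hypotheses (x_neq0 : forall i, (i < n)%N -> x i != 0) (y_neq0 : y != 0).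
Local Notation N := (t * n + 1)%N.
Local Notation np := (size (beta_r lam N t p)).
Local Notation nq := (size (beta_r lam N t q)).
Hypothesis n_pq : (np + nq = 2 * n + 1)%N.

Lemma schur_numerator_factor :
  \matrix_(i < 2 * n + 1, j < 2 * n + 1)
     zvars n t x y i ^+ (nth 0 (rho_star lam N t p q) j + (2 * n + 1 - 1 - j))%N
  = diag_mx (\row_i rowvar n x y i ^+ (t * (nth 0 (tquot lam N t p) 0 + np))%N) *m
    \matrix_(i, j) Mblock n t lam p q x y i (rev_block nq np j).
Proof.
rewrite mul_diag_mx; apply/matrixP => i j; rewrite !mxE zvarsE -exprM /=.
have j_lt : (j < nq + np)%N by have := ltn_ord j; lia.
rewrite rev_blockE; last lia.
rewrite /rev_block_idx j_lt.
case: (ltnP j nq) => jq /=; first rewrite jq.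
  by rewrite -exprD -rho_star_exp_q // (_ : 2 * n + 1 - 1 - j = nq + np - 1 - j)%N; last lia.
set k := (2 * n + 1 - 1 - j)%N.
have klt : (k < np)%N by lia.
rewrite ifF; last lia.
rewrite (_ : nq + np - 1 - (j - nq) - nq = k)%N; last lia.
rewrite -(rho_star_exp_p q t_gt0 lam_sorted klt) (_ : nq + np - 1 - k = j)%N; last lia.
by rewrite exprD exprVn mulfK // expf_neq0 // rowvar_neq0.
Qed.

End NumeratorFactorization.

Theorem lemma3p11 (F : fieldType) (t n : nat) (lam : seq nat) (p q : nat)
  (x : nat -> F) (y : F) :
  (2 <= t)%N -> (1 <= n)%N ->
  sorted geq lam -> (size lam <= t * n + 1)%N ->
  (p < t)%N -> (q < t)%N ->
  (n_r lam (t * n + 1) t p + n_r lam (t * n + 1) t q = 2 * n + 1)%N ->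
  (forall i, (i < n)%N -> x i != 0) -> y != 0 ->
  Vprod n t x y != 0 ->
  schur (rho_star lam (t * n + 1) t p q) (zvars n t x y) =
    (-1) ^+ ((n_r lam (t * n + 1) t p * (n_r lam (t * n + 1) t p).-1) %/ 2)
    * y ^+ (t * (nth 0 (tquot lam (t * n + 1) t p) 0 + n_r lam (t * n + 1) t p))
    / Vprod n t x y * \det (Mblock n t lam p q x y).
Proof.
move=> t_ge2 _ lam_sorted _ _ _ n_pq x_neq0 y_neq0 _.
have t_gt0 : (0 < t)%N by lia.
rewrite /n_r in n_pq *.
rewrite /schur det_Vandermonde_rev vandermonde_zvars schur_numerator_factor //.
rewrite det_mulmx det_diag det_rev_block; last lia.
under eq_bigr do rewrite mxE.
rewrite prodrXl prod_rowvar //.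
ring.
Qed.
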